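(* Let $v\in\mathbb{Z}^d$ be primitive and $p$ a prime. Let $h\in H_v(\mathbb{Q}_p)\cap\mathrm{SO}_d(\mathbb{Z}_p)\mathrm{SO}_d(\mathbb{Z}[1/p])$, and write $h=c_1\gamma_1$ with $c_1\in\mathrm{SO}_d(\mathbb{Z}_p)$, $\gamma_1\in\mathrm{SO}_d(\mathbb{Z}[1/p])$, and $g_v^{-1}hg_v=c_2\gamma_2^{-1}$ with $c_2\in\mathrm{ASL}_{d-1}(\mathbb{Z}_p)$, $\gamma_2\in\mathrm{ASL}_{d-1}(\mathbb{Z}[1/p])$. Let $\Lambda$ be the $\mathbb{Z}$-span of the first $d-1$ columns of $\gamma_1g_v\gamma_2$. Then $\gamma_1v$ is a primitive integer vector, $\Lambda=\Lambda_{\gamma_1v}$, and $\mathrm{cov}(\Lambda)=\mathrm{cov}(\Lambda_v)$.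
   Context: For primitive $u\in\mathbb{Z}^d$, $\Lambda_u=u^\perp\cap\mathbb{Z}^d$. $H_v\le\mathrm{SO}_d$ is the stabilizer of $v$; $g_v\in\mathrm{SL}_d(\mathbb{Z})$ is a matrix whose first $d-1$ columns form a positively oriented $\mathbb{Z}$-basis of $\Lambda_v$. $\mathrm{ASL}_{d-1}=\{\begin{pmatrix}g&*\\0&1\end{pmatrix}:g\in\mathrm{SL}_{d-1}\}$; $g_v^{-1}H_vg_v\le\mathrm{ASL}_{d-1}$. The covolume of a rank-$(d-1)$ discrete subgroup with basis matrix $b\in M_{d\times(d-1)}(\mathbb{R})$ is $\sqrt{\det(b^tb)}$. *)

From HB Require Import structures.
From mathcomp Require Import all_boot all_order all_algebra all_field.
Set Implicit Arguments. Unset Strict Implicit. Unset Printing Implicit Defensive.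
Import Order.TTheory GRing.Theory Num.Theory.
Local Open Scope ring_scope.

(* libraries.  We therefore quantify over every pair (K, O) of a field K    *)
(* and a subring O satisfying the axioms below; these axioms characterize   *)
(* (Q_p, Z_p) up to unique isomorphism:                                     *)
(* Hence O / p^n O = Z / p^n Z and O = lim Z/p^n = Z_p, K = O[1/p] = Q_p.  *)
Record padic_model (p : nat) (K : fieldType) (O : {pred K}) : Prop := {
  pm_char0 : [pchar K] =i pred0;
  pm_one : 1 \in O;
  pm_sub : forall x y, x \in O -> y \in O -> x - y \in O;
  pm_mul : forall x y, x \in O -> y \in O -> x * y \in O;
  pm_rat : forall r : rat, (ratr r \in O) = ~~ (p %| absz (denq r))%N;
  pm_val : forall x : K, x != 0 ->
     exists (k : int) (u : K), [/\ u \in O, u^-1 \in O & x = p%:R ^ k * u];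
  pm_dense : forall x, x \in O -> forall n : nat,
     exists z : int, (x - z%:~R) / p%:R ^+ n \in O;
  pm_sep : forall x : K, (forall n : nat, x / p%:R ^+ n \in O) -> x = 0;
  pm_complete : forall a : nat -> K, (forall n, a n \in O) ->
     (forall n, (a n.+1 - a n) / p%:R ^+ n \in O) ->
     exists2 x, x \in O & forall n, (x - a n) / p%:R ^+ n \in O
}.

Arguments padic_model p K O : clear implicits.

Definition in_Zinvp (p : nat) (r : rat) : Prop :=
  exists k : nat, (denq r %| (p ^ k)%:Z)%Z.

Definition intmx (R : pzRingType) m n (M : 'M[int]_(m, n)) : 'M[R]_(m, n) :=
  map_mx (fun z : int => z%:~R) M.
Definition ratmx (R : unitRingType) m n (M : 'M[rat]_(m, n)) : 'M[R]_(m, n) :=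
  map_mx (fun r : rat => ratr r) M.
Arguments intmx {R m n} M.
Arguments ratmx {R m n} M.

Definition is_SO (R : comUnitRingType) d (S : R -> Prop) (M : 'M[R]_d) : Prop :=
  [/\ forall i j, S (M i j), M^T *m M = 1%:M & \det M = 1].

(* ASL_{n}(S) = { (g *; 0 1) : g in SL_n(S) } inside 'M_(n+1) *)
Definition is_ASL (R : comUnitRingType) n (S : R -> Prop) (M : 'M[R]_(n + 1)) : Prop :=
  [/\ forall i j, S (M i j), dlsubmx M = 0, drsubmx M = 1%:M & \det (ulsubmx M) = 1].

Definition primitive d (v : 'cV[int]_d) : Prop :=
  (\big[gcdn/0%N]_(i < d) absz (v i ord0))%N = 1%N.

Definition Lambda d (u : 'cV[int]_d) (x : 'cV[rat]_d) : Prop :=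
  exists z : 'cV[int]_d, x = intmx z /\ u^T *m z = 0.

Definition Zspan d k (B : 'M[rat]_(d, k)) (x : 'cV[rat]_d) : Prop :=
  exists c : 'cV[int]_k, x = B *m intmx c.

Definition is_gv n (v : 'cV[int]_(n + 1)) (g : 'M[int]_(n + 1)) : Prop :=
  [/\ \det g = 1,
      forall x, Zspan (intmx (lsubmx g)) x <-> Lambda v x
    & 0 < \det (row_mx (lsubmx g) v)].

Definition in_Hv (K : fieldType) d (v : 'cV[int]_d) (h : 'M[K]_d) : Prop :=
  is_SO (fun _ => True) h /\ h *m intmx v = intmx v.

Definition covol d k (b : 'M[rat]_(d, k)) : algC :=
  sqrtC (\det ((ratmx b)^T *m ratmx b)).

(* Since h fixes v and h = c1 g1 with c1 orthogonal, g1 v = c1^T v; the two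
   factorisations likewise give g1 gv g2 = c1^T gv c2.  The left-hand sides have
   entries in Z[1/p] and the right-hand sides entries in Z_p, so w := g1 v and
   M := g1 gv g2 are integral, and det M = 1.  As v^T gv = (0 | a) is fixed by
   ASL, w^T M = v^T gv.  Multiplying by a unimodular matrix preserves the content
   of a vector and transports orthogonal lattices, so w is primitive and Lambda_w
   is spanned by the first d - 1 columns of M.  Finally g1 is orthogonal and the
   upper-left block of g2 has determinant 1, so the Gram determinant, hence the
   covolume, is unchanged. *)

From HB Require Import structures.
From mathcomp Require Import all_boot all_order all_algebra all_field.
From mathcomp Require Import ring.
Import Order.TTheory GRing.Theory Num.Theory.
Set Implicit Arguments. Unset Strict Implicit. Unset Printing Implicit Defensive.
Local Open Scope ring_scope.

Section RatrCharZero.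
Variable K : fieldType.
Hypothesis K_char0 : [pchar K] =i pred0.

Lemma intr_gt0_neq0 (b : int) : 0 < b -> b%:~R != 0 :> K.
Proof.
by case: b => // n n_gt0; rewrite -pmulrn ((pcharf0P K).1 K_char0) -lt0n.
Qed.

Lemma ratr_frac (a b : int) : 0 < b -> ratr (a%:~R / b%:~R) = a%:~R / b%:~R :> K.
Proof.
move=> b_gt0; set x := _ / _.
have cross : numq x * b = a * denq x.
  apply: (@intr_inj rat); rewrite !intrM numqE /x mulrAC divfK //.
  by rewrite intr_eq0 gt_eqF.
by apply/eqP; rewrite /ratr eqr_div ?intr_gt0_neq0 // -!intrM cross.
Qed.

(* The library provides this morphism only for numFieldType. *)
Fact ratr_is_zmod_morphism_char0 : zmod_morphism (@ratr K).
Proof.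
move=> x y; rewrite -[x in LHS]divq_num_den -[y in LHS]divq_num_den.
have dx := denq_gt0 x; have dy := denq_gt0 y.
have -> : (numq x)%:Q / (denq x)%:Q - (numq y)%:Q / (denq y)%:Q =
    (numq x * denq y - numq y * denq x)%:~R / (denq x * denq y)%:~R.
  by rewrite intrB !intrM; field; rewrite !intr_eq0 !gt_eqF.
rewrite ratr_frac ?mulr_gt0 // /ratr intrB !intrM.
by field; rewrite !intr_gt0_neq0.
Qed.

Fact ratr_is_monoid_morphism_char0 : monoid_morphism (@ratr K).
Proof.
split=> [|x y]; first by rewrite /ratr divr1.
rewrite -[x in LHS]divq_num_den -[y in LHS]divq_num_den.
have dx := denq_gt0 x; have dy := denq_gt0 y.
have -> : (numq x)%:Q / (denq x)%:Q * ((numq y)%:Q / (denq y)%:Q) =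
    (numq x * numq y)%:~R / (denq x * denq y)%:~R.
  by rewrite !intrM; field; rewrite !intr_eq0 !gt_eqF.
rewrite ratr_frac ?mulr_gt0 // /ratr !intrM.
by field; rewrite !intr_gt0_neq0.
Qed.

Definition ratr_rmorphism : {rmorphism rat -> K} :=
  HB.pack (@ratr K)
    (GRing.isZmodMorphism.Build rat K (@ratr K) ratr_is_zmod_morphism_char0)
    (GRing.isMonoidMorphism.Build rat K (@ratr K) ratr_is_monoid_morphism_char0).

Lemma ratmxM m k l (A : 'M[rat]_(m, k)) (B : 'M[rat]_(k, l)) :
  ratmx (A *m B) = ratmx A *m ratmx B :> 'M[K]_(m, l).
Proof. exact: (map_mxM ratr_rmorphism). Qed.

Lemma ratmx_unitmx k (A : 'M[rat]_k) : (ratmx A : 'M[K]_k) \in unitmx = (A \in unitmx).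
Proof. exact: (map_unitmx ratr_rmorphism). Qed.

End RatrCharZero.

Lemma intmxM (R : comPzRingType) m k l (A : 'M[int]_(m, k)) (B : 'M[int]_(k, l)) :
  intmx (A *m B) = intmx A *m intmx B :> 'M[R]_(m, l).
Proof. exact: (map_mxM (intr : int -> R)). Qed.

Lemma det_intmx (R : comPzRingType) k (A : 'M[int]_k) :
  \det (intmx A : 'M[R]_k) = (\det A)%:~R.
Proof. exact: (det_map_mx (intr : int -> R)). Qed.

Lemma intmx_tr (R : pzRingType) m k (A : 'M[int]_(m, k)) :
  intmx A^T = (intmx A)^T :> 'M[R]_(k, m).
Proof. exact/esym/map_trmx. Qed.

Lemma intmx_inj m k : injective (@intmx rat m k).
Proof.
move=> A B /matrixP eqAB; apply/matrixP=> i j.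
by apply: (@intr_inj rat); have := eqAB i j; rewrite !mxE.
Qed.

Lemma ratmx_intmx (R : unitRingType) m k (A : 'M[int]_(m, k)) :
  ratmx (intmx A : 'M[rat]_(m, k)) = intmx A :> 'M[R]_(m, k).
Proof. by apply/matrixP=> i j; rewrite !mxE ratr_int. Qed.

Section MatrixOver.
Variables (R : pzSemiRingType) (S : R -> Prop).

Definition mx_over m k (A : 'M[R]_(m, k)) := forall i j, S (A i j).

Lemma mx_over_tr m k (A : 'M[R]_(m, k)) : mx_over A -> mx_over A^T.
Proof. by move=> SA i j; rewrite mxE. Qed.

Hypotheses (S0 : S 0) (SD : forall x y, S x -> S y -> S (x + y))
  (SM : forall x y, S x -> S y -> S (x * y)).

Lemma mx_over_mul m k l (A : 'M[R]_(m, k)) (B : 'M[R]_(k, l)) :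
  mx_over A -> mx_over B -> mx_over (A *m B).
Proof.
move=> SA SB i j; rewrite mxE.
by elim/big_ind: _ => // t _; apply: SM.
Qed.

End MatrixOver.

Section Zinvp.
Variable p : nat.

Lemma in_ZinvpP r :
  in_Zinvp p r <-> exists (k : nat) (z : int), r * p%:R ^+ k = z%:~R.
Proof.
have pXk k : ((p ^ k)%N%:~R : rat) = p%:R ^+ k by rewrite -natrX.
split=> [[k /dvdzP [q def_pk]] | [k [z def_z]]].
  by exists k, (numq r * q); rewrite -pXk def_pk !intrM numqE; ring.
have eq_num : numq r * (p ^ k)%N%:Z = z * denq r.
  by apply: (@intr_inj rat); rewrite !intrM numqE pXk -def_z; ring.
have cop : coprime `|denq r| `|numq r| by rewrite coprime_sym coprime_num_den.
by exists k; rewrite dvdzE -(Gauss_dvdr _ cop) -abszM eq_num abszM dvdn_mull.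
Qed.

Lemma in_Zinvp_int (z : int) : in_Zinvp p z%:~R.
Proof. by exists 0%N; rewrite denq_int dvd1z. Qed.

Lemma in_ZinvpD r s : in_Zinvp p r -> in_Zinvp p s -> in_Zinvp p (r + s).
Proof.
move=> /in_ZinvpP[k [a def_a]] /in_ZinvpP[l [b def_b]]; apply/in_ZinvpP.
exists (k + l)%N, (a * (p ^ l)%N%:Z + b * (p ^ k)%N%:Z).
by rewrite intrD !intrM -!pmulrn !natrX -def_a -def_b exprD; ring.
Qed.

Lemma in_ZinvpM r s : in_Zinvp p r -> in_Zinvp p s -> in_Zinvp p (r * s).
Proof.
move=> /in_ZinvpP[k [a def_a]] /in_ZinvpP[l [b def_b]]; apply/in_ZinvpP.
by exists (k + l)%N, (a * b); rewrite intrM -def_a -def_b exprD; ring.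
Qed.

Lemma in_Zinvp_denq_eq1 r :
  prime p -> in_Zinvp p r -> ~~ (p %| `|denq r|)%N -> denq r = 1.
Proof.
move=> p_prime [k den_dvd] p_ndvd.
have cop : coprime `|denq r| (p ^ k) by rewrite coprimeXr // coprime_sym prime_coprime.
move: den_dvd; rewrite dvdzE => /gcdn_idPl; rewrite (eqP cop) => den1.
by rewrite -absz_denq -den1.
Qed.

Lemma in_Zinvp_mx_mul m k l (A : 'M[rat]_(m, k)) (B : 'M[rat]_(k, l)) :
  mx_over (in_Zinvp p) A -> mx_over (in_Zinvp p) B -> mx_over (in_Zinvp p) (A *m B).
Proof.
by apply: mx_over_mul; [exact: (in_Zinvp_int 0) | exact: in_ZinvpD | exact: in_ZinvpM].
Qed.

Lemma in_Zinvp_intmx m k (A : 'M[int]_(m, k)) : mx_over (in_Zinvp p) (intmx A).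
Proof. by move=> i j; rewrite mxE; apply: in_Zinvp_int. Qed.

End Zinvp.

Section PadicIntegers.
Variables (p : nat) (K : fieldType) (O : {pred K}).
Hypotheses (PM : padic_model p K O) (p_prime : prime p).

Lemma padic0 : 0 \in O.
Proof. by rewrite -(subrr 1); apply: (pm_sub PM); apply: (pm_one PM). Qed.

Lemma padicD x y : x \in O -> y \in O -> x + y \in O.
Proof.
move=> Ox Oy; rewrite -[y]opprK -[- y]sub0r.
by do 2!apply: (pm_sub PM) => //; apply: padic0.
Qed.

Lemma padic_int (z : int) : z%:~R \in O.
Proof.
by rewrite -ratr_int (pm_rat PM) denq_int /= dvdn1; case: eqP p_prime => // ->.
Qed.

Lemma padic_mx_mul m k l (A : 'M[K]_(m, k)) (B : 'M[K]_(k, l)) :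
  mx_over (fun x => x \in O) A -> mx_over (fun x => x \in O) B ->
  mx_over (fun x => x \in O) (A *m B).
Proof. by apply: mx_over_mul; [exact: padic0 | exact: padicD | exact: (pm_mul PM)]. Qed.

Lemma padic_intmx m k (A : 'M[int]_(m, k)) :
  mx_over (fun x => x \in O) (intmx A : 'M[K]_(m, k)).
Proof. by move=> i j; rewrite mxE; apply: padic_int. Qed.

Lemma ratmx_padic_integral m k (X : 'M[rat]_(m, k)) :
  mx_over (in_Zinvp p) X -> mx_over (fun x => x \in O) (ratmx X : 'M[K]_(m, k)) ->
  exists Z, X = intmx Z.
Proof.
move=> XZ XO; exists (map_mx numq X); apply/matrixP=> i j; rewrite !mxE.
have := XO i j; rewrite /= mxE (pm_rat PM) => /(in_Zinvp_denq_eq1 p_prime (XZ i j)).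
by rewrite numqE => ->; rewrite mulr1.
Qed.

End PadicIntegers.

Definition content d (u : 'cV[int]_d) : nat := \big[gcdn/0%N]_(i < d) absz (u i ord0).

Lemma content_dvd_mul m d (A : 'M[int]_(m, d)) (u : 'cV[int]_d) :
  (content u %| content (A *m u))%N.
Proof.
apply/dvdn_biggcdP => i _; suff: ((content u)%:Z %| (A *m u) i ord0)%Z by [].
rewrite mxE; apply: rpred_sum => j _; apply: dvdz_mull.
by rewrite dvdzE; apply: (biggcdn_inf j).
Qed.

Lemma content_mul_unitmx d (A : 'M[int]_d) (u : 'cV[int]_d) :
  A \in unitmx -> content (A *m u) = content u.
Proof.
move=> A_unit; apply/eqP; rewrite eqn_dvd content_dvd_mul andbT.
by rewrite -{2}(mulKmx A_unit u) content_dvd_mul.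
Qed.

Lemma content_transfer d (u u' : 'cV[int]_d) (G G' : 'M[int]_d) :
  G \in unitmx -> G' \in unitmx -> u^T *m G = u'^T *m G' -> content u = content u'.
Proof.
move=> G_unit G'_unit uG.
rewrite -(content_mul_unitmx u (_ : G^T \in unitmx)) ?unitmx_tr //.
rewrite -(content_mul_unitmx u' (_ : G'^T \in unitmx)) ?unitmx_tr //.
by rewrite -[u in LHS]trmxK -[u' in RHS]trmxK -!trmx_mul uG.
Qed.

Lemma Lambda_intmx d (u z : 'cV[int]_d) : Lambda u (intmx z) <-> u^T *m z = 0.
Proof. by split=> [[z' [/intmx_inj ->]] | uz] //; exists z. Qed.

Lemma Zspan_lsubmx_mul k l (G : 'M[int]_(k + l)) (y : 'cV[int]_(k + l)) :
  G \in unitmx -> Zspan (intmx (lsubmx G)) (intmx (G *m y)) <-> dsubmx y = 0.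
Proof.
have lsubmxE (c : 'cV_k) : lsubmx G *m c = G *m col_mx c 0.
  by rewrite -{2}[G]hsubmxK mul_row_col mulmx0 addr0.
move=> G_unit; split=> [[c] | y_d0].
  rewrite -intmxM lsubmxE => /intmx_inj /(can_inj (mulKmx G_unit)) ->.
  exact: col_mxKd.
by exists (usubmx y); rewrite -intmxM lsubmxE -y_d0 vsubmxK.
Qed.

Lemma Lambda_transfer k l (u u' : 'cV[int]_(k + l)) (G G' : 'M[int]_(k + l)) :
  G \in unitmx -> G' \in unitmx -> u^T *m G = u'^T *m G' ->
  (forall x, Zspan (intmx (lsubmx G)) x <-> Lambda u x) ->
  forall x, Zspan (intmx (lsubmx G')) x <-> Lambda u' x.
Proof.
move=> G_unit G'_unit uG spanG.
have key z : Zspan (intmx (lsubmx G')) (intmx z) <-> Lambda u' (intmx z).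
  rewrite -[z](mulKVmx G'_unit) Zspan_lsubmx_mul // -(Zspan_lsubmx_mul _ G_unit).
  by rewrite spanG !Lambda_intmx !mulmxA uG.
move=> x; split=> [[c ->] | [z [-> u'z]]].
  by rewrite -intmxM; apply/key; exists c; rewrite intmxM.
by apply/key; exists z.
Qed.

Lemma covolE d k (b : 'M[rat]_(d, k)) : covol b = sqrtC (ratr (\det (b^T *m b))).
Proof. by rewrite /covol map_trmx -map_mxM det_map_mx. Qed.

Lemma covol_orthogonal_mul d k (g : 'M[rat]_d) (b : 'M[rat]_(d, k)) :
  g^T *m g = 1%:M -> covol (g *m b) = covol b.
Proof. by move=> gTg; rewrite !covolE trmx_mul mulmxA -(mulmxA b^T) gTg mulmx1. Qed.

Lemma covol_mul_det1 d k (b : 'M[rat]_(d, k)) (a : 'M[rat]_k) :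
  \det a = 1 -> covol (b *m a) = covol b.
Proof.
move=> det_a; rewrite !covolE.
have -> : (b *m a)^T *m (b *m a) = a^T *m (b^T *m b) *m a by rewrite trmx_mul !mulmxA.
by rewrite !det_mulmx det_tr det_a mul1r mulr1.
Qed.

Section ASL.
Variables (R : comUnitRingType) (n : nat) (S : R -> Prop) (g : 'M[R]_(n + 1)).
Hypothesis gASL : is_ASL S g.

Lemma is_ASL_det : \det g = 1.
Proof.
by case: gASL => _ g_dl g_dr g_ul; rewrite -(submxK g) g_dl g_dr det_ublock det1 mulr1.
Qed.

Lemma is_ASL_fix_row m (a : 'M[R]_(m, 1)) : row_mx 0 a *m g = row_mx 0 a.
Proof.
case: gASL => _ g_dl g_dr _.
by rewrite -{1}(submxK g) g_dl g_dr mul_row_block !mul0mx mulmx0 mulmx1 !add0r.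
Qed.

Lemma lsubmx_mul_ASL m (B : 'M[R]_(m, n + 1)) : lsubmx (B *m g) = lsubmx B *m ulsubmx g.
Proof.
case: gASL => _ g_dl _ _.
by rewrite -{1}[B]hsubmxK -{1}(submxK g) g_dl mul_row_block row_mxKl mulmx0 addr0.
Qed.

End ASL.

Lemma is_gv_row n (v : 'cV[int]_(n + 1)) (gv : 'M[int]_(n + 1)) :
  is_gv v gv -> v^T *m gv = row_mx 0 (v^T *m rsubmx gv).
Proof.
case=> _ gv_span _; rewrite -{1}[gv]hsubmxK mul_mx_row; congr row_mx.
apply/matrixP=> i j.
have /Lambda_intmx : Lambda v (intmx (lsubmx gv *m delta_mx j 0)).
  by apply/gv_span; exists (delta_mx j 0); rewrite intmxM.
by rewrite mulmxA -colE => /matrixP /(_ i 0); rewrite !mxE.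
Qed.

Section OrthogonalFactor.
Variables (R : comUnitRingType) (n : nat) (c g h : 'M[R]_n).
Hypotheses (cTc : c^T *m c = 1%:M) (def_h : h = c *m g).

Lemma mulmx_fixed_factor k (x : 'M[R]_(n, k)) : h *m x = x -> g *m x = c^T *m x.
Proof. by move=> hx; rewrite -[in RHS]hx def_h !mulmxA cTc mul1mx. Qed.

Lemma mulmx_conj_factor (G B c' : 'M[R]_n) :
  G \in unitmx -> B \in unitmx -> invmx G *m h *m G = c' *m invmx B ->
  g *m G *m B = c^T *m G *m c'.
Proof.
move=> G_unit B_unit conj_h.
have hGB : h *m G *m B = G *m c'.
  rewrite -[h *m G](mulKVmx G_unit) (mulmxA (invmx G)) conj_h -mulmxA.
  by rewrite mulmxKV.
by rewrite -[RHS]mulmxA -hGB def_h !mulmxA cTc mul1mx.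
Qed.

End OrthogonalFactor.

Theorem corollary3p3 (n p : nat) (K : fieldType) (O : {pred K})
    (v : 'cV[int]_(n + 1)) (gv : 'M[int]_(n + 1))
    (h c1 c2 : 'M[K]_(n + 1)) (g1 g2 : 'M[rat]_(n + 1)) :
  padic_model p K O -> prime p ->
  primitive v -> is_gv v gv ->
  in_Hv v h ->
  is_SO (fun x => x \in O) c1 -> is_SO (in_Zinvp p) g1 ->
  h = c1 *m ratmx g1 ->
  is_ASL (fun x => x \in O) c2 -> is_ASL (in_Zinvp p) g2 ->
  invmx (intmx gv) *m h *m intmx gv = c2 *m invmx (ratmx g2) ->
  exists w : 'cV[int]_(n + 1),
    [/\ g1 *m intmx v = intmx w, primitive w,
        (forall x, Zspan (lsubmx (g1 *m intmx gv *m g2)) x <-> Lambda w x)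
      & covol (lsubmx (g1 *m intmx gv *m g2)) = covol (intmx (lsubmx gv))].
Proof.
move=> PM p_prime v_prim gvP [_ hv] [c1O c1T _] [g1Z g1T g1_det] def_h c2ASL g2ASL conj_h.
have K_char0 := pm_char0 PM.
have [gv_det gv_span _] := gvP.
have [[c2O _ _ _] [g2Z _ _ g2_ul]] := (c2ASL, g2ASL).
have [w def_w] : exists w, g1 *m intmx v = intmx w.
  apply: (ratmx_padic_integral PM p_prime).
    exact: in_Zinvp_mx_mul g1Z (in_Zinvp_intmx _ _).
  rewrite ratmxM // ratmx_intmx (mulmx_fixed_factor c1T def_h hv).
  by apply: (padic_mx_mul PM); [apply: mx_over_tr | apply: (padic_intmx PM p_prime)].
have [M def_M] : exists M, g1 *m intmx gv *m g2 = intmx M.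
  apply: (ratmx_padic_integral PM p_prime).
    exact: in_Zinvp_mx_mul (in_Zinvp_mx_mul g1Z (in_Zinvp_intmx _ _)) g2Z.
  rewrite !ratmxM // ratmx_intmx (mulmx_conj_factor c1T def_h _ _ conj_h).
  - by do 2!apply: (padic_mx_mul PM) => //;
      [apply: mx_over_tr | apply: (padic_intmx PM p_prime)].
  - by rewrite unitmxE det_intmx gv_det unitr1.
  - by rewrite ratmx_unitmx // unitmxE (is_ASL_det g2ASL) unitr1.
have wM : w^T *m M = v^T *m gv.
  apply: intmx_inj; rewrite !intmxM !intmx_tr -def_w -def_M trmx_mul !mulmxA.
  rewrite -(mulmxA _ g1^T) g1T mulmx1 -intmx_tr -intmxM (is_gv_row gvP).
  by rewrite /intmx map_row_mx map_mx0 (is_ASL_fix_row g2ASL).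
have gv_unit : gv \in unitmx by rewrite unitmxE gv_det unitr1.
have M_unit : M \in unitmx.
  rewrite unitmxE (_ : \det M = 1) ?unitr1 //; apply: (@intr_inj rat).
  rewrite -det_intmx -def_M !det_mulmx g1_det det_intmx gv_det.
  by rewrite (is_ASL_det g2ASL) !mul1r.
exists w; split=> //.
- exact: etrans (content_transfer M_unit gv_unit wM) v_prim.
- by rewrite def_M -map_lsubmx; apply: Lambda_transfer gv_span.
- rewrite (lsubmx_mul_ASL g2ASL) -mulmx_lsub covol_mul_det1 //.
  by rewrite covol_orthogonal_mul // -map_lsubmx.
Qed.
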